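(* Let $\phi$ be the $2$-spin structure on the closed torus $\Sigma_1$ with $\phi(\alpha)=1$ and $\phi(\beta)=0$, where $\alpha,\beta$ are simple closed curves with $|\alpha\cap\beta|=1$. Set $a=t_\alpha$ and $b=t_\beta$. Then $\operatorname{Mod}(\Sigma_1)[\phi]$ is generated by $a^2$ and $b$, and has the presentation $\langle a^2,b\mid (a^2b)^2=(ba^2)^2,\ (a^2b)^4=1\rangle$.
   Context: A $2$-spin structure on a surface is a map $\phi$ from isotopy classes of oriented simple closed curves to $\mathbb{Z}/2$ with $\phi(t_c(d))=\phi(d)+(d\cdot c)\phi(c)$ ($t_c$ Dehn twist, $d\cdot c$ algebraic intersection) and $\sum\phi(c_i)=\chi(S)\bmod 2$ whenever $c_1,\dots,c_m$ is the oriented boundary of a subsurface $S$; it is determined by its values on a homology basis. $\operatorname{Mod}(\Sigma_1)$ acts by $(f\cdot\phi)(c)=\phi(f^{-1}(c))$ and $\operatorname{Mod}(\Sigma_1)[\phi]$ is the stabilizer of $\phi$. The claimed presentation means that the abstract group with generators $x,y$ and relations $(xy)^2=(yx)^2$, $(xy)^4=1$ is isomorphic to $\operatorname{Mod}(\Sigma_1)[\phi]$ via $x\mapsto t_\alpha^2$, $y\mapsto t_\beta$. *)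

(* Homological model of the torus Sigma_1:
   Mod(Sigma_1) = SL(2,Z) acting on H_1(Sigma_1;Z) = Z^2, with
   alpha = (1,0), beta = (0,1), algebraic intersection alpha.beta = 1.
   Isotopy classes of oriented essential simple closed curves = primitive
   vectors of Z^2. *)
From mathcomp Require Import all_boot all_algebra.
Set Implicit Arguments. Unset Strict Implicit. Unset Printing Implicit Defensive.
Import GRing.Theory Num.Theory.
Local Open Scope ring_scope.

Definition vec := (int * int)%type.

Definition primitive (c : vec) : bool := coprimez c.1 c.2.

(* algebraic intersection number c . d *)
Definition dot (c d : vec) : int := c.1 * d.2 - c.2 * d.1.

Definition alpha : vec := (1, 0).
Definition beta : vec := (0, 1).

Definition i0 : 'I_2 := ord0.
Definition i1 : 'I_2 := @Ordinal 2 1 isT.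

Definition act (A : 'M[int]_2) (v : vec) : vec :=
  (A i0 i0 * v.1 + A i0 i1 * v.2, A i1 i0 * v.1 + A i1 i1 * v.2).

Definition SL2Z (A : 'M[int]_2) : Prop := \det A = 1.

(* Dehn twist about c, acting on homology: d |-> d + (c . d) c *)
Definition twist_vec (c d : vec) : vec :=
  (d.1 + dot c d * c.1, d.2 + dot c d * c.2).
Definition twist (c : vec) : 'M[int]_2 :=
  \matrix_(i < 2, j < 2)
    ((i == j)%:R + (if i == i0 then c.1 else c.2) *
                   (if j == i0 then - c.2 else c.1)).

(* a 2-spin structure (values in Z/2) on the essential curves of the torus:
   twist formula, and the boundary condition for the only subsurfaces
   whose boundary consists of essential curves (annuli, chi = 0). *)
Definition is_2spin (phi : vec -> 'Z_2) : Prop :=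
  (forall c d, primitive c -> primitive d ->
     phi (twist_vec c d) = phi d + (dot d c)%:~R * phi c) /\
  (forall c, primitive c -> phi c + phi (- c.1, - c.2) = 0).

Definition in_stab (phi : vec -> 'Z_2) (A : 'M[int]_2) : Prop :=
  SL2Z A /\ forall c, primitive c -> phi (act (invmx A) c) = phi c.

Definition ta : 'M[int]_2 := twist alpha.
Definition tb : 'M[int]_2 := twist beta.

(* words in the abstract generators x, y: a letter (g, e) is
   x (g = false) or y (g = true), inverted iff e = true *)
Definition letter := (bool * bool)%type.
Definition X : letter := (false, false).
Definition Xi : letter := (false, true).
Definition Y : letter := (true, false).
Definition Yi : letter := (true, true).

Definition rel1 : seq letter := [:: X; Y; X; Y; Xi; Yi; Xi; Yi].
Definition rel2 : seq letter := [:: X; Y; X; Y; X; Y; X; Y].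

Definition null_words : seq (seq letter) :=
  [:: [:: X; Xi]; [:: Xi; X]; [:: Y; Yi]; [:: Yi; Y]; rel1; rel2].

Inductive pstep : seq letter -> seq letter -> Prop :=
| PStep u v r : r \in null_words -> pstep (u ++ r ++ v) (u ++ v).

(* equality in the presented group < x, y | (xy)^2=(yx)^2, (xy)^4=1 >:
   the equivalence relation generated by pstep *)
Inductive pres_equiv : seq letter -> seq letter -> Prop :=
| PE_step w1 w2 : pstep w1 w2 -> pres_equiv w1 w2
| PE_refl w : pres_equiv w w
| PE_sym w1 w2 : pres_equiv w1 w2 -> pres_equiv w2 w1
| PE_trans w1 w2 w3 : pres_equiv w1 w2 -> pres_equiv w2 w3 -> pres_equiv w1 w3.

Definition letter_mx (l : letter) : 'M[int]_2 :=
  let M := if l.1 then tb else ta ^+ 2 in if l.2 then invmx M else M.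
Definition evalw (w : seq letter) : 'M[int]_2 :=
  foldr (fun l M => letter_mx l * M) 1 w.

From mathcomp Require Import all_boot all_algebra zify ring.
From Stdlib Require Import Setoid Morphisms.
Import GRing.Theory.
Local Open Scope ring_scope.

(* Running Euclid's algorithm through the twist formula along α and β forces
   φ(p,q) = p mod 2, so the stabiliser of φ is Γ⁰(2) = {A ∈ SL(2,ℤ) | A₀₁ even}.  Euclid's
   algorithm on the first column (a,c) of such a matrix, with the moves a ↦ a ± 2c (left
   multiplication by a^±2) and c ↦ c ± a (by b^∓1), writes it as a word in a² and b.
   For the presentation put z = xy: the relations make z² central with z⁴ = 1, so every
   word reduces to z^2e x^n₀ z x^n₁ ⋯ z x^n_k with n₁, …, n_(k-1) ≠ 0.  Ping-pong on
   slopes (x^n with n ≠ 0 moves slopes in (0,2) outside [0,2], and z moves them back)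
   shows that only the empty normal form is mapped to the identity. *)

Definition mx2 (a b c d : int) : 'M[int]_2 :=
  \matrix_(i, j) if i == i0 then (if j == i0 then a else b) else (if j == i0 then c else d).

Lemma ord2_ind (P : 'I_2 -> Prop) : P i0 -> P i1 -> forall i, P i.
Proof.
move=> P0 P1 [[|[|//]] lt_i2].
- by rewrite (_ : Ordinal lt_i2 = i0) //; apply: val_inj.
- by rewrite (_ : Ordinal lt_i2 = i1) //; apply: val_inj.
Qed.

Lemma mx2_eta (A : 'M[int]_2) : A = mx2 (A i0 i0) (A i0 i1) (A i1 i0) (A i1 i1).
Proof. by apply/matrixP; elim/ord2_ind; elim/ord2_ind; rewrite mxE. Qed.

Lemma mx2_inj a b c d a' b' c' d' :
  mx2 a b c d = mx2 a' b' c' d' -> [/\ a = a', b = b', c = c' & d = d'].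
Proof.
move/matrixP => e.
by split; [move: (e i0 i0) | move: (e i0 i1) | move: (e i1 i0) | move: (e i1 i1)]; rewrite !mxE.
Qed.

Lemma mx2_1 : 1 = mx2 1 0 0 1.
Proof. by apply/matrixP; elim/ord2_ind; elim/ord2_ind; rewrite !mxE. Qed.

Lemma mulmx2 a b c d a' b' c' d' :
  mx2 a b c d * mx2 a' b' c' d' =
  mx2 (a * a' + b * c') (a * b' + b * d') (c * a' + d * c') (c * b' + d * d').
Proof.
apply/matrixP; elim/ord2_ind; elim/ord2_ind;
  by rewrite -mulmxE mxE !big_ord_recl big_ord0 !mxE /= addr0.
Qed.

Lemma det_mx2 a b c d : \det (mx2 a b c d) = a * d - b * c.
Proof.
rewrite (expand_det_row _ i0) !big_ord_recl big_ord0 /cofactor !det_mx11 !mxE /=.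
by rewrite expr0 expr1 !mul1r mulN1r addr0 mulrN.
Qed.

Lemma invmx2 a b c d : a * d - b * c = 1 -> invmx (mx2 a b c d) = mx2 d (- b) (- c) a.
Proof.
move=> det1.
have inv : mx2 a b c d *m mx2 d (- b) (- c) a = 1%:M.
  by rewrite mulmxE mulmx2 idmxE mx2_1; congr mx2; lia.
have [unitA _] := mulmx1_unit inv.
by rewrite -[invmx _]mulmx1 -inv mulKmx.
Qed.

Lemma act_mx2 a b c d v : act (mx2 a b c d) v = (a * v.1 + b * v.2, c * v.1 + d * v.2).
Proof. by rewrite /act !mxE. Qed.

Lemma act_mul A B v : act (A * B) v = act A (act B v).
Proof. rewrite [A]mx2_eta [B]mx2_eta mulmx2 !act_mx2 /=; congr pair; ring. Qed.

Lemma pchar_Z2 : 2 \in [pchar 'Z_2].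
Proof. exact: pchar_Fp. Qed.

Lemma Z2_mul_eq1 (x y : 'Z_2) : x * y = 1 -> y = 1.
Proof. by move: x y => [[|[|//]] ?] [[|[|//]] ?] /val_eqP //= _; apply: val_inj. Qed.

(** * The spin structure and its stabiliser *)

Lemma primitive_addl a c : primitive (a + c, c) = primitive (a, c).
Proof. by rewrite /primitive /coprimez /= gcdzC gcdzDr gcdzC. Qed.

Lemma primitive_subl a c : primitive (a - c, c) = primitive (a, c).
Proof. by rewrite -primitive_addl subrK. Qed.

Lemma primitive_addr a c : primitive (a, c + a) = primitive (a, c).
Proof. by rewrite /primitive /coprimez /= gcdzDr. Qed.

Lemma primitive_subr a c : primitive (a, c - a) = primitive (a, c).
Proof. by rewrite -primitive_addr subrK. Qed.

Lemma primitive_act a b c d v :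
  a * d - b * c = 1 -> primitive v -> primitive (act (mx2 a b c d) v).
Proof.
move=> det1 /coprimezP[[u w] /= uw1]; apply/coprimezP.
exists (u * d - w * c, w * a - u * b); rewrite act_mx2 /= -uw1 -[RHS]mulr1 -det1; ring.
Qed.

Lemma primitive_axis a : primitive (a, 0) -> a = 1 \/ a = -1.
Proof. by rewrite /primitive /coprimez /= gcdz0; lia. Qed.

Lemma level2_descent (P : int -> int -> Prop) :
    (forall c, P 0 c) -> (forall a, P a 0) ->
    (forall a c, P (a + 2 * c) c -> P a c) -> (forall a c, P (a - 2 * c) c -> P a c) ->
    (forall a c, P a (c + a) -> P a c) -> (forall a c, P a (c - a) -> P a c) ->
  forall a c, P a c.
Proof.
move=> P0c Pa0 PaD PaB PcD PcB a c.
have [n] := ubnP (`|a| + `|c|)%N; elim: n a c => // n IH a c size_lt.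
have [-> | a0] := eqVneq a 0; first exact: P0c.
have [-> | c0] := eqVneq c 0; first exact: Pa0.
have [lt_ca | le_ac] := ltnP `|c| `|a|.
- have [lt | lt] : (`|(a + 2 * c)%R| < `|a|)%N \/ (`|(a - 2 * c)%R| < `|a|)%N by lia.
  + by apply: PaD; apply: IH; lia.
  + by apply: PaB; apply: IH; lia.
- have [lt | lt] : (`|(c + a)%R| < `|c|)%N \/ (`|(c - a)%R| < `|c|)%N by lia.
  + by apply: PcD; apply: IH; lia.
  + by apply: PcB; apply: IH; lia.
Qed.

Section SpinStructure.

Variable phi : vec -> 'Z_2.
Hypotheses (phi_spin : is_2spin phi) (phi_alpha : phi alpha = 1) (phi_beta : phi beta = 0).

Lemma phi_opp p q : primitive (p, q) -> phi (- p, - q) = phi (p, q).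
Proof.
move=> prim; have /eqP := proj2 phi_spin _ prim.
by rewrite addr_eq0 (oppr_pchar2 pchar_Z2) => /eqP->.
Qed.

Lemma phi_twist_alpha p q : primitive (p, q) -> phi (p + q, q) = phi (p, q) + q%:~R.
Proof.
move=> prim; have := proj1 phi_spin alpha (p, q) isT prim.
rewrite /twist_vec /dot phi_alpha /= !(mul1r, mul0r, mulr0, mulr1, subr0, sub0r, addr0).
by rewrite intrN (oppr_pchar2 pchar_Z2).
Qed.

Lemma phi_twist_beta p q : primitive (p, q) -> phi (p, q - p) = phi (p, q).
Proof.
move=> prim; have := proj1 phi_spin beta (p, q) isT prim.
by rewrite /twist_vec /dot phi_beta /= !(mul1r, mul0r, mulr0, mulr1, sub0r, addr0).
Qed.

Lemma phi_primitive v : primitive v -> phi v = v.1%:~R.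
Proof.
have stepD a c : (primitive (a + c, c) -> phi (a + c, c) = (a + c)%:~R) ->
    primitive (a, c) -> phi (a, c) = a%:~R.
  move=> IH prim; apply: (addIr c%:~R).
  by rewrite -phi_twist_alpha // IH ?primitive_addl ?intrD.
have stepB a c : (primitive (a - c, c) -> phi (a - c, c) = (a - c)%:~R) ->
    primitive (a, c) -> phi (a, c) = a%:~R.
  move=> IH prim; have prim' : primitive (a - c, c) by rewrite primitive_subl.
  by rewrite -[in LHS](subrK c a) phi_twist_alpha // IH // -intrD subrK.
case: v; apply: level2_descent => [c | a | a c IH | a c IH | a c IH | a c IH] /=.
- rewrite /primitive /= coprimez_sym => /primitive_axis[-> | ->]; first exact: phi_beta.
  by rewrite -oppr0 phi_opp // phi_beta.
- move=> /primitive_axis[-> | ->]; first exact: phi_alpha.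
  by rewrite -oppr0 phi_opp // phi_alpha intrN (oppr_pchar2 pchar_Z2).
- by do 2 apply: (stepD); rewrite -addrA -mulr2n -mulr_natl.
- by do 2 apply: (stepB); rewrite -addrA -opprD -mulr2n -mulr_natl.
- move=> prim; have prim' : primitive (a, c + a) by rewrite primitive_addr.
  by rewrite -(addrK a c) phi_twist_beta // IH.
- by move=> prim; rewrite -phi_twist_beta // IH ?primitive_subr.
Qed.

Lemma in_stabE A : in_stab phi A <-> \det A = 1 /\ (2 %| A i0 i1)%Z.
Proof.
rewrite /in_stab /SL2Z [A]mx2_eta det_mx2 !mxE /=.
move: (A i0 i0) (A i0 i1) (A i1 i0) (A i1 i1) => a b c d.
split=> -[det1 fix_phi]; split=> //.
- have := fix_phi beta isT; rewrite invmx2 // phi_beta phi_primitive; last first.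
    by apply: primitive_act => //; lia.
  rewrite act_mx2 /= => /eqP; rewrite -(dvdz_pcharf pchar_Z2); lia.
- have b0 : b%:~R = 0 :> 'Z_2 by apply/eqP; rewrite -(dvdz_pcharf pchar_Z2).
  have d1 : d%:~R = 1 :> 'Z_2.
    have := congr1 (intmul (1 : 'Z_2)) det1.
    by rewrite intrB !intrM b0 mul0r subr0 => /Z2_mul_eq1.
  move=> v prim; rewrite invmx2 // !phi_primitive //; last by apply: primitive_act => //; lia.
  by rewrite act_mx2 /= intrD !intrM d1 intrN b0 oppr0 mul0r mul1r addr0.
Qed.

End SpinStructure.

(** * Generation by a² and b *)

Lemma ta2E : ta ^+ 2 = mx2 1 2 0 1.
Proof.
have -> : ta = mx2 1 1 0 1 by apply/matrixP; elim/ord2_ind; elim/ord2_ind; rewrite !mxE.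
by rewrite expr2 mulmx2.
Qed.

Lemma tbE : tb = mx2 1 0 (-1) 1.
Proof. by apply/matrixP; elim/ord2_ind; elim/ord2_ind; rewrite !mxE. Qed.

Lemma letter_mxX : letter_mx X = mx2 1 2 0 1.
Proof. exact: ta2E. Qed.

Lemma letter_mxXi : letter_mx Xi = mx2 1 (-2) 0 1.
Proof. by rewrite /letter_mx /= ta2E invmx2. Qed.

Lemma letter_mxY : letter_mx Y = mx2 1 0 (-1) 1.
Proof. exact: tbE. Qed.

Lemma letter_mxYi : letter_mx Yi = mx2 1 0 1 1.
Proof. by rewrite /letter_mx /= tbE invmx2 // oppr0 opprK. Qed.

Lemma evalw_cons l w : evalw (l :: w) = letter_mx l * evalw w.
Proof. by []. Qed.

Lemma evalw_cat u v : evalw (u ++ v) = evalw u * evalw v.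
Proof. by elim: u => [|l u IH] /=; rewrite ?mul1r // IH mulrA. Qed.

Definition xpow (n : int) : seq letter :=
  match n with Posz m => nseq m X | Negz m => nseq m.+1 Xi end.

Definition zw : seq letter := [:: X; Y].
Definition zsq : seq letter := [:: X; Y; X; Y].

Lemma evalw_xpow n : evalw (xpow n) = mx2 1 (2 * n) 0 1.
Proof.
case: n => m /=; elim: m => [|m IH] /=; rewrite ?mx2_1 // ?IH ?letter_mxX ?letter_mxXi mulmx2.
all: by congr mx2; lia.
Qed.

Lemma evalw_zw : evalw zw = mx2 (-1) 2 (-1) 1.
Proof. by rewrite /= letter_mxX letter_mxY mx2_1 !mulmx2. Qed.

Lemma evalw_zsq : evalw zsq = mx2 (-1) 0 0 (-1).
Proof. by rewrite /= letter_mxX letter_mxY mx2_1 !mulmx2. Qed.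

Lemma level2_words A : \det A = 1 -> (2 %| A i0 i1)%Z -> exists w, evalw w = A.
Proof.
rewrite [A]mx2_eta det_mx2 !mxE /=.
move: (A i0 i0) (A i0 i1) (A i1 i0) (A i1 i1) => a b c d; move: a c b d.
apply: level2_descent => [c | a | a c IH | a c IH | a c IH | a c IH] b d det1 b2.
- lia.
- have /orP[/eqP d1 | /eqP d1] := @intUnitRing.unitzPl d a ltac:(lia).
  + exists (xpow (b %/ 2)%Z); rewrite evalw_xpow; congr mx2; lia.
  + exists (zsq ++ xpow (- (b %/ 2)%Z)); rewrite evalw_cat evalw_zsq evalw_xpow mulmx2.
    congr mx2; lia.
- have [w ew] := IH (b + 2 * d) d ltac:(lia) ltac:(lia).
  by exists (Xi :: w); rewrite evalw_cons ew letter_mxXi mulmx2; congr mx2; lia.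
- have [w ew] := IH (b - 2 * d) d ltac:(lia) ltac:(lia).
  by exists (X :: w); rewrite evalw_cons ew letter_mxX mulmx2; congr mx2; lia.
- have [w ew] := IH b (d + b) ltac:(lia) b2.
  by exists (Y :: w); rewrite evalw_cons ew letter_mxY mulmx2; congr mx2; lia.
- have [w ew] := IH b (d - b) ltac:(lia) b2.
  by exists (Yi :: w); rewrite evalw_cons ew letter_mxYi mulmx2; congr mx2; lia.
Qed.

(** * The presentation *)

Notation "u ≡ v" := (pres_equiv u v) (at level 70).

#[local] Instance pres_equiv_Equivalence : Equivalence pres_equiv.
Proof. by split; [exact: PE_refl | exact: PE_sym | exact: PE_trans]. Qed.

#[local] Hint Resolve PE_refl : core.

Lemma pres_equiv_ctx p s u v : u ≡ v -> p ++ u ++ s ≡ p ++ v ++ s.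
Proof.
elim=> [_ _ [u' v' r null_r] | // | w1 w2 _ IH | w1 w2 w3 _ IH1 _ IH2].
- by apply: PE_step; have := PStep (p ++ u') (v' ++ s) null_r; rewrite !catA.
- by symmetry.
- by rewrite IH1.
Qed.

#[local] Instance cat_Proper :
  Proper (pres_equiv ==> pres_equiv ==> pres_equiv) (@cat letter).
Proof.
move=> u u' eu v v' ev; transitivity (u' ++ v).
  exact: (pres_equiv_ctx [::] v _ _ eu).
by have := pres_equiv_ctx u' [::] _ _ ev; rewrite !cats0.
Qed.

#[local] Instance cons_Proper : Proper (eq ==> pres_equiv ==> pres_equiv) (@cons letter).
Proof. by move=> l _ <- v v' ev; apply: (cat_Proper [:: l] [:: l] (PE_refl _)). Qed.

Lemma null_word_cancel r s : r \in null_words -> r ++ s ≡ s.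
Proof. by move=> null_r; apply: PE_step; apply: (PStep [::] s null_r). Qed.

Definition letter_inv (l : letter) : letter := (l.1, ~~ l.2).

Lemma cancel_inv l s : [:: l, letter_inv l & s] ≡ s.
Proof. by case: l => [[] []]; apply: (null_word_cancel [:: _; _]). Qed.

Lemma zsq_swap : zsq ≡ [:: Y; X; Y; X].
Proof.
transitivity (rel1 ++ [:: Y; X; Y; X]); last exact: null_word_cancel.
by rewrite /= (cancel_inv Yi) (cancel_inv Xi) (cancel_inv Yi) (cancel_inv Xi).
Qed.

Lemma zsq_letter l : l :: zsq ≡ zsq ++ [:: l].
Proof.
have zsqX : X :: zsq ≡ zsq ++ [:: X] by rewrite {1}zsq_swap.
have zsqY : Y :: zsq ≡ zsq ++ [:: Y].
  by change ([:: Y; X; Y; X] ++ [:: Y] ≡ zsq ++ [:: Y]); rewrite -zsq_swap.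
have zsq_inv m m' : (forall s, [:: m, m' & s] ≡ s) -> (forall s, [:: m', m & s] ≡ s) ->
    m :: zsq ≡ zsq ++ [:: m] -> m' :: zsq ≡ zsq ++ [:: m'].
  move=> mm' m'm zsqm; transitivity (m' :: (zsq ++ [:: m]) ++ [:: m']).
    by rewrite -catA cat1s mm' cats0.
  by rewrite -zsqm; apply: m'm.
case: l => [[] []]; first exact: (zsq_inv Y Yi (cancel_inv Y) (cancel_inv Yi)).
- exact: zsqY.
- exact: (zsq_inv X Xi (cancel_inv X) (cancel_inv Xi)).
- exact: zsqX.
Qed.

Lemma zsq_central w : zsq ++ w ≡ w ++ zsq.
Proof.
elim: w => [|l w IH]; first by rewrite cats0.
transitivity ((zsq ++ [:: l]) ++ w); first by rewrite -catA.
by rewrite -zsq_letter cat_cons IH.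
Qed.

Lemma zsq_zsq s : zsq ++ zsq ++ s ≡ s.
Proof. by rewrite catA; apply: null_word_cancel. Qed.

Definition zsq_pow (e : bool) : seq letter := if e then zsq else [::].

Lemma zsq_pow_central e w s : w ++ zsq_pow e ++ s ≡ zsq_pow e ++ w ++ s.
Proof.
case: e; rewrite /zsq_pow // !catA.
by apply: cat_Proper => //; symmetry; apply: zsq_central.
Qed.

Lemma X_xpow n : X :: xpow n ≡ xpow (n + 1).
Proof.
case: n => [m | [|m]] /=; first by rewrite addn1.
- exact: (cancel_inv X [::]).
- by rewrite subSS subn0; apply: cancel_inv.
Qed.

Lemma Xi_xpow n : Xi :: xpow n ≡ xpow (n - 1).
Proof.
case: n => [[|m] | m] /=; rewrite ?addn0 //.
by rewrite subSS subn0; apply: cancel_inv.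
Qed.

Lemma evalw_pres_equiv u v : u ≡ v -> evalw u = evalw v.
Proof.
have evalw_null r : r \in null_words -> evalw r = 1.
  move=> null_r; apply/eqP; move: r null_r; apply/allP.
  by rewrite /= letter_mxX letter_mxXi letter_mxY letter_mxYi mx2_1 !mulmx2 /= !eqxx.
elim=> [_ _ [u' v' r /evalw_null r1] | // | w1 w2 _ -> | w1 w2 w3 _ -> _ ->] //.
by rewrite !evalw_cat r1 mul1r.
Qed.

Fixpoint tail_word (r : seq int) : seq letter :=
  if r is n :: r' then zw ++ xpow n ++ tail_word r' else [::].

(* [NForm e n₀ [:: n₁; …; n_k]] stands for z^2e x^n₀ z x^n₁ ⋯ z x^n_k, where z = xy. *)
Record nform := NForm { nf_zsq : bool; nf_head : int; nf_tail : seq int }.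

Definition nf_word (n : nform) : seq letter :=
  zsq_pow (nf_zsq n) ++ xpow (nf_head n) ++ tail_word (nf_tail n).

Definition nf_one : nform := NForm false 0 [::].

Definition nf_shift (k : int) (n : nform) : nform :=
  NForm (nf_zsq n) (nf_head n + k) (nf_tail n).

Definition nf_mulz (n : nform) : nform :=
  let: NForm e n0 r := n in
  match r with
  | n1 :: r' => if n0 == 0 then NForm (~~ e) n1 r' else NForm e 0 (n0 :: r)
  | [::] => NForm e 0 [:: n0]
  end.

(* Left multiplication by a letter, using y = x⁻¹z and y⁻¹ = z³x. *)
Definition nf_mul (l : letter) : nform -> nform :=
  match l with
  | (false, false) => nf_shift 1
  | (false, true) => nf_shift (-1)
  | (true, false) => nf_shift (-1) \o nf_mulz
  | (true, true) => iter 3 nf_mulz \o nf_shift 1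
  end.

Definition normal (w : seq letter) : nform := foldr nf_mul nf_one w.

Lemma nf_shiftX n : X :: nf_word n ≡ nf_word (nf_shift 1 n).
Proof.
case: n => e n0 r; rewrite /nf_word /= -cat1s zsq_pow_central.
by apply: cat_Proper => //; rewrite catA cat1s X_xpow.
Qed.

Lemma nf_shiftXi n : Xi :: nf_word n ≡ nf_word (nf_shift (-1) n).
Proof.
case: n => e n0 r; rewrite /nf_word /= -cat1s zsq_pow_central.
by apply: cat_Proper => //; rewrite catA cat1s Xi_xpow.
Qed.

Lemma nf_mulzP n : zw ++ nf_word n ≡ nf_word (nf_mulz n).
Proof.
case: n => e n0 [|n1 r]; rewrite /nf_word zsq_pow_central //=.
by case: eqP => [-> | _] //; case: e => //; apply: zsq_zsq.
Qed.

Lemma nf_mulP l n : l :: nf_word n ≡ nf_word (nf_mul l n).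
Proof.
case: l => [[] []]; last 2 first.
- exact: nf_shiftXi.
- exact: nf_shiftX.
- transitivity (zw ++ zw ++ zw ++ X :: nf_word n); last by rewrite nf_shiftX !nf_mulzP.
  transitivity (rel2 ++ Yi :: nf_word n); first by symmetry; apply: null_word_cancel.
  by rewrite [rel2 ++ _]/= (cancel_inv Y).
- transitivity (Xi :: zw ++ nf_word n); first by symmetry; apply: (cancel_inv Xi).
  by rewrite nf_mulzP nf_shiftXi.
Qed.

Lemma normalP w : w ≡ nf_word (normal w).
Proof. by elim: w => [|l w IH] //=; rewrite -nf_mulP -IH. Qed.

Fixpoint nonzero_but_last (r : seq int) : bool :=
  if r is n :: (_ :: _) as r' then (n != 0) && nonzero_but_last r' else true.

Lemma nf_mulz_reduced n :
  nonzero_but_last (nf_tail n) -> nonzero_but_last (nf_tail (nf_mulz n)).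
Proof.
case: n => e n0 [|n1 r] //=; case: (n0 =P 0) => [_ | /eqP n0_neq0] /=.
- by case: r => //= n2 r /andP[].
- by move=> red; rewrite n0_neq0.
Qed.

Lemma normal_reduced w : nonzero_but_last (nf_tail (normal w)).
Proof.
elim: w => [|[[] []] w IH] //; last exact: nf_mulz_reduced.
by do 3 apply: nf_mulz_reduced.
Qed.

(* The slope v.1 / v.2 lies in (0, 2), resp. outside [0, 2]. *)
Definition slope_inside (v : vec) : bool := 0 < v.1 * v.2 < 2 * (v.2 * v.2).
Definition slope_outside (v : vec) : bool :=
  (v.2 != 0) && ((v.1 * v.2 < 0) || (2 * (v.2 * v.2) < v.1 * v.2)).

Lemma xpow_outside n v :
  n != 0 -> slope_inside v -> slope_outside (act (mx2 1 (2 * n) 0 1) v).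
Proof. by case: v => p q; rewrite act_mx2 /slope_inside /slope_outside /=; nia. Qed.

Lemma zw_inside v : slope_outside v -> slope_inside (act (mx2 (-1) 2 (-1) 1) v).
Proof. by case: v => p q; rewrite act_mx2 /slope_inside /slope_outside /=; nia. Qed.

Lemma evalw_tail_word n r :
  evalw (tail_word (n :: r)) = evalw zw * (evalw (xpow n) * evalw (tail_word r)).
Proof. by rewrite -!evalw_cat. Qed.

Lemma tail_word_inside n r :
  nonzero_but_last (n :: r) -> slope_inside (act (evalw (tail_word (n :: r))) alpha).
Proof.
elim: r n => [|m r IH] n; rewrite evalw_tail_word evalw_zw evalw_xpow 2!act_mul.
- by rewrite /= mx2_1 !act_mx2 /slope_inside /=; lia.
- by move=> /andP[n0 red]; apply/zw_inside/xpow_outside => //; apply: IH.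
Qed.

Lemma evalw_zsq_pow e :
  evalw (zsq_pow e) = if e then mx2 (-1) 0 0 (-1) else mx2 1 0 0 1.
Proof. by case: e; [exact: evalw_zsq | exact: mx2_1]. Qed.

Lemma nf_word_eq1 n : nonzero_but_last (nf_tail n) -> evalw (nf_word n) = 1 -> n = nf_one.
Proof.
case: n => e n0 r /= red; rewrite /nf_word /= 2!evalw_cat evalw_xpow evalw_zsq_pow.
case: r red => [_ | n1 r red].
- rewrite mulr1 mx2_1; case: e; rewrite mulmx2 => /mx2_inj[] //= _ two_n0 _ _.
  by rewrite (_ : n0 = 0) //; lia.
- move/(congr1 (fun M => (act M alpha).2)); rewrite 2!act_mul.
  have := tail_word_inside _ _ red; case: (act _ alpha) => p q.
  by case: e; rewrite /slope_inside mx2_1 !act_mx2 /=; nia.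
Qed.

Lemma evalw_eq1 w : evalw w = 1 <-> w ≡ [::].
Proof.
split=> [w1 | /evalw_pres_equiv //].
have w_nf := normalP w; have := evalw_pres_equiv _ _ w_nf; rewrite w1.
by move=> /esym/(nf_word_eq1 _ (normal_reduced w)) nf1; rewrite w_nf nf1.
Qed.

Theorem mainTheorem10 (phi : vec -> 'Z_2) :
  is_2spin phi -> phi alpha = 1 -> phi beta = 0 ->
  [/\ in_stab phi (ta ^+ 2), in_stab phi tb,
      (forall A, in_stab phi A -> exists w, evalw w = A) &
      (forall w, evalw w = 1 <-> pres_equiv w [::])].
Proof.
move=> spin phi_alpha phi_beta; have stabE := in_stabE _ spin phi_alpha phi_beta.
split.
- by apply/stabE; rewrite ta2E det_mx2 !mxE.
- by apply/stabE; rewrite tbE det_mx2 !mxE.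
- by move=> A /stabE[]; apply: level2_words.
- exact: evalw_eq1.
Qed.
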